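(* Under the setting below, let $X$ be such that $k^*(X)=\arg\max_{k\in K}p_\theta(k\mid X)$ is unique. Then for every translation $\mathbf g\in\mathbb{Z}^3$, $k^*(T_{\mathbf g}X)$ is unique and equals $\pi_{\mathbf g}(k^*(X))$, and $$\mathrm{APT}(T_{\mathbf g}X)=T_{\mathbf g'}\,\mathrm{APT}(X),\qquad \mathbf g'=\Big\lfloor \tfrac{k^*(X)+\mathbf g}{\mathbf s}\Big\rfloor$$ (floor and division componentwise), where $T_{\mathbf g'}$ is a circular translation of the coarse grid.
   Context: Volumes $X:\mathbb{Z}_D\times\mathbb{Z}_H\times\mathbb{Z}_W\to\mathbb{R}^C$ with periodic boundary conditions; patch size $\mathbf s=(s_D,s_H,s_W)$ with $s_D\mid D$, $s_H\mid H$, $s_W\mid W$. Translation: $(T_{\mathbf g}Y)(x)=Y(x-\mathbf g)$, indices modulo the grid size. Phase index set $K=\{0,\dots,s_D-1\}\times\{0,\dots,s_H-1\}\times\{0,\dots,s_W-1\}$. Polyphase decomposition: for $k=(p,q,r)\in K$, $\Psi(X)_k(i,j,l)=X(i s_D+p,\;j s_H+q,\;l s_W+r)$ on the coarse grid $V=\mathbb{Z}_{D/s_D}\times\mathbb{Z}_{H/s_H}\times\mathbb{Z}_{W/s_W}$. $\tilde f_\theta$ maps volumes on $V$ to real-valued fields on $V$ and is translation-equivariant: $\tilde f_\theta(T_{\mathbf c}Y)=T_{\mathbf c}\tilde f_\theta(Y)$. Score $f_\theta(Y)=\frac1{|V|}\sum_{v\in V}\tilde f_\theta(Y)[v]$;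 selection probabilities $p_\theta(k\mid X)=\exp[f_\theta(\Psi(X)_k)]/\sum_{k'\in K}\exp[f_\theta(\Psi(X)_{k'})]$. Permutation $\pi_{\mathbf g}(k)=(k+\mathbf g)\bmod\mathbf s$ componentwise. Adaptive Phase Tokenization (deterministic/inference mode): $\mathrm{APT}(X)=\Psi(X)_{k^*(X)}$ with $k^*(X)=\arg\max_{k\in K}p_\theta(k\mid X)$. *)

From HB Require Import structures.
From mathcomp Require Import all_boot all_order all_algebra.
From mathcomp Require Import reals.
From mathcomp Require Import sequences.
From mathcomp.analysis Require Import exp.
Set Implicit Arguments. Unset Strict Implicit. Unset Printing Implicit Defensive.
Import Order.TTheory GRing.Theory Num.Theory.
Local Open Scope ring_scope.

Lemma ord_pos n (i : 'I_n) : (0 < n)%N.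
Proof. by case: n i => [[]|]. Qed.

Lemma divn_pos_pos (D s : nat) : (0 < D %/ s)%N -> (0 < D)%N.
Proof. by case: D => //; rewrite div0n. Qed.

Lemma zmod_lt (n : nat) (Hn : (0 < n)%N) (k : int) : (`|(k %% n)%Z|%N < n)%N.
Proof.
have n0 : (n%:Z != 0) by rewrite eqz_nat -lt0n.
have h0 := modz_ge0 k n0.
have h1 : ((k %% n)%Z < n%:Z) by apply: ltz_pmod; rewrite ltz_nat.
by rewrite -ltz_nat gez0_abs.
Qed.

Definition zord (n : nat) (Hn : (0 < n)%N) (k : int) : 'I_n :=
  Ordinal (zmod_lt Hn k).

Definition addz_ord n (i : 'I_n) (z : int) : 'I_n := zord (ord_pos i) (i%:Z + z).

Definition grid (a b c : nat) := ('I_a * 'I_b * 'I_c)%type.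
Definition int3 := (int * int * int)%type.

Definition transl (a b c : nat) (T : Type) (g : int3) (Y : grid a b c -> T)
  : grid a b c -> T :=
  fun x => Y (addz_ord x.1.1 (- g.1.1), addz_ord x.1.2 (- g.1.2),
              addz_ord x.2 (- g.2)).

Definition phases (sD sH sW : nat) := grid sD sH sW.
Definition coarse (D H W sD sH sW : nat) := grid (D %/ sD) (H %/ sH) (W %/ sW).

Definition fine_ord (D s : nat) (i : 'I_(D %/ s)) (p : nat) : 'I_D :=
  zord (divn_pos_pos (ord_pos i)) ((i * s + p)%N%:Z).

Definition polyphase (T : Type) (D H W sD sH sW : nat)
  (X : grid D H W -> T) (k : phases sD sH sW) : coarse D H W sD sH sW -> T :=
  fun v => X (fine_ord v.1.1 k.1.1, fine_ord v.1.2 k.1.2, fine_ord v.2 k.2).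

Section APT.
Variables (R : realType) (C D H W sD sH sW : nat).
Local Notation V := (coarse D H W sD sH sW).
Local Notation K := (phases sD sH sW).
Variable ftilde : (V -> 'rV[R]_C) -> V -> R.

Definition score (Y : V -> 'rV[R]_C) : R :=
  (#|{: V}|%:R)^-1 * \sum_(v : V) ftilde Y v.

Definition prob (X : grid D H W -> 'rV[R]_C) (k : K) : R :=
  expR (score (polyphase X k)) /
  \sum_(k' : K) expR (score (polyphase X k')).

(* k*(X) = argmax_k p(k|X); k0 is only the default used by arg max
   (it is irrelevant when the maximiser is unique) *)
Definition kstar (k0 : K) (X : grid D H W -> 'rV[R]_C) : K :=
  [arg max_(k > k0) prob X k]%O.

Definition APT (k0 : K) (X : grid D H W -> 'rV[R]_C) : V -> 'rV[R]_C :=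
  polyphase X (kstar k0 X).

End APT.

Definition unique_argmax (R : realType) (I : finType) (f : I -> R) (k : I) :=
  forall k', k' != k -> f k' < f k.

Definition perm_phase (sD sH sW : nat) (g : int3) (k : phases sD sH sW)
  : phases sD sH sW :=
  (addz_ord k.1.1 g.1.1, addz_ord k.1.2 g.1.2, addz_ord k.2 g.2).

Definition coarse_shift (sD sH sW : nat) (g : int3) (k : phases sD sH sW) : int3 :=
  (((k.1.1%:Z + g.1.1) %/ sD%:Z)%Z, ((k.1.2%:Z + g.1.2) %/ sH%:Z)%Z,
   ((k.2%:Z + g.2) %/ sW%:Z)%Z).

Definition transl_equivariant (R : realType) (C a b c : nat)
  (F : (grid a b c -> 'rV[R]_C) -> grid a b c -> R) :=
  forall (g : int3) (Y : grid a b c -> 'rV[R]_C), F (transl g Y) = transl g (F Y).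

(* Translating X by g permutes its polyphase components: the component of
   phase k + g (mod s) of the translated volume is the component of phase k of
   X, circularly translated on the coarse grid by floor((k + g) / s).  A
   translation-equivariant ftilde has a translation-invariant mean, so every
   score, hence every probability, is merely relabelled by the permutation
   pi_g of the phases; a unique maximiser is therefore moved to pi_g of it,
   and the selected component is the translated one. *)
From HB Require Import structures.
From mathcomp Require Import all_boot all_order all_algebra.
From mathcomp Require Import reals.
From mathcomp Require Import sequences.
From mathcomp.analysis Require Import exp.
From mathcomp Require Import ring.
From Stdlib Require Import FunctionalExtensionality.
Import Order.TTheory GRing.Theory Num.Theory.
Local Open Scope ring_scope.

Lemma zordE n (Hn : (0 < n)%N) k : (zord Hn k)%:Z = (k %% n)%Z.
Proof. by rewrite /zord /= gez0_abs // modz_ge0 // eqz_nat -lt0n. Qed.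

Lemma addz_ordK n (z : int) : cancel (@addz_ord n ^~ z) (@addz_ord n ^~ (- z)).
Proof.
move=> i; apply: val_inj; apply/eqP; rewrite -eqz_nat; apply/eqP.
by rewrite /addz_ord !zordE modzDml addrK modz_small // ltz_nat ltn_ord.
Qed.

Lemma addz_ordNK n (z : int) : cancel (@addz_ord n ^~ (- z)) (@addz_ord n ^~ z).
Proof. by move=> i; rewrite -{2}(opprK z) addz_ordK. Qed.

(* Moving the fine offset m to m + g (mod s) is compensated by moving the
   coarse index by -floor((m + g) / s); this needs s | D. *)
Lemma fine_ord_shift D s (hs : (s %| D)%N) (i : 'I_(D %/ s)) (m : 'I_s) g :
  fine_ord (addz_ord i (- ((m%:Z + g) %/ s)%Z)) m
  = addz_ord (fine_ord i (addz_ord m g)) (- g).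
Proof.
apply: val_inj; apply/eqP; rewrite -eqz_nat; apply/eqP.
rewrite /fine_ord /addz_ord !zordE !PoszD !PoszM !zordE.
have eD : D%:Z = (D %/ s)%:Z * s%:Z by rewrite -PoszM divnK.
rewrite eD mulz_modl ?ltz_nat ?(ord_pos m) // !modzDml; congr (_ %% _)%Z.
have := divz_eq (m%:Z + g) s.
set q := ((m%:Z + g) %/ s)%Z; set r := ((m%:Z + g) %% s)%Z => em.
have -> : r = m%:Z + g - q * s%:Z by rewrite em; ring.
ring.
Qed.

Definition neg3 (g : int3) : int3 := (- g.1.1, - g.1.2, - g.2).

(* [perm_phase g] is componentwise addition of g on an arbitrary grid; in
   particular [transl g Y] is [Y \o perm_phase (neg3 g)]. *)
Lemma perm_phaseK {a b c} g :
  cancel (@perm_phase a b c g) (perm_phase (neg3 g)).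
Proof. by case=> [[i j] l]; rewrite /perm_phase /= !addz_ordK. Qed.

Lemma perm_phaseKV {a b c} g :
  cancel (@perm_phase a b c (neg3 g)) (perm_phase g).
Proof. by case=> [[i j] l]; rewrite /perm_phase /= !addz_ordNK. Qed.

Lemma sum_transl (V : nmodType) a b c (g : int3) (Y : grid a b c -> V) :
  \sum_x transl g Y x = \sum_x Y x.
Proof. exact: esym (reindex_inj (can_inj (perm_phaseKV g))). Qed.

Lemma polyphase_transl (T : Type) D H W sD sH sW
  (hD : (sD %| D)%N) (hH : (sH %| H)%N) (hW : (sW %| W)%N)
  (X : grid D H W -> T) (g : int3) (k : phases sD sH sW) :
  polyphase (transl g X) (perm_phase g k)
  = transl (coarse_shift g k) (polyphase X k).
Proof.
apply: functional_extensionality => -[[i j] l].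
by rewrite /polyphase /transl /perm_phase /coarse_shift /= !fine_ord_shift.
Qed.

Lemma score_transl (R : realType) C D H W sD sH sW
  (F : (coarse D H W sD sH sW -> 'rV[R]_C) -> coarse D H W sD sH sW -> R)
  (hF : transl_equivariant F) (g : int3) Y :
  score F (transl g Y) = score F Y.
Proof. by rewrite /score hF sum_transl. Qed.

Lemma prob_transl (R : realType) C D H W sD sH sW
  (hD : (sD %| D)%N) (hH : (sH %| H)%N) (hW : (sW %| W)%N)
  (F : (coarse D H W sD sH sW -> 'rV[R]_C) -> coarse D H W sD sH sW -> R)
  (hF : transl_equivariant F) (X : grid D H W -> 'rV[R]_C) g k :
  prob F (transl g X) (perm_phase g k) = prob F X k.
Proof.
have score_phase k' :
    score F (polyphase (transl g X) (perm_phase g k')) = score F (polyphase X k').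
  by rewrite polyphase_transl // score_transl.
rewrite /prob score_phase (reindex_inj (can_inj (perm_phaseK g))) /=.
by under eq_bigr do rewrite score_phase.
Qed.

Lemma unique_argmax_can (R : realType) (I : finType) (f f' : I -> R)
  (h h' : I -> I) (hK : cancel h h') (hK' : cancel h' h) k :
  (forall i, f' (h i) = f i) -> unique_argmax f k -> unique_argmax f' (h k).
Proof.
move=> ff' U i ne; rewrite -(hK' i) !ff'; apply: U.
by apply: contra ne => /eqP <-; rewrite hK'.
Qed.

Lemma arg_max_unique (R : realType) (I : finType) (f : I -> R) k k0 :
  unique_argmax f k -> [arg max_(i > k0) f i]%O = k.
Proof.
move=> U; case: arg_maxP => // i _ max_i; apply/eqP; apply: contraT => ne.
by rewrite -(lt_geF (U i ne)); exact: max_i.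
Qed.

Theorem mainTheorem3 (R : realType) (C D H W sD sH sW : nat)
  (hD : (sD %| D)%N) (hH : (sH %| H)%N) (hW : (sW %| W)%N)
  (ftilde : (coarse D H W sD sH sW -> 'rV[R]_C) -> coarse D H W sD sH sW -> R)
  (hequiv : transl_equivariant ftilde)
  (k0 : phases sD sH sW)
  (X : grid D H W -> 'rV[R]_C)
  (huniq : exists k, unique_argmax (prob ftilde X) k) :
  forall g : int3,
    (exists k, unique_argmax (prob ftilde (transl g X)) k) /\
    kstar ftilde k0 (transl g X) = perm_phase g (kstar ftilde k0 X) /\
    APT ftilde k0 (transl g X)
      = transl (coarse_shift g (kstar ftilde k0 X)) (APT ftilde k0 X).
Proof.
move=> g; case: huniq => k U.
have Ug : unique_argmax (prob ftilde (transl g X)) (perm_phase g k).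
  apply: unique_argmax_can (perm_phaseK g) (perm_phaseKV g) _ _ U.
  exact: prob_transl.
have kX : kstar ftilde k0 X = k by apply: arg_max_unique.
have kgX : kstar ftilde k0 (transl g X) = perm_phase g k by apply: arg_max_unique.
split; first by exists (perm_phase g k).
by rewrite /APT kgX kX polyphase_transl.
Qed.
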